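(* Consider the sequence of binary classification problems indexed by $m$ described in the context, with $N=n$, and suppose that $n=o(m)$, $m=o(n^2)$, and moreover $m=o(n^2/(\log n)^2)$ as $m\to\infty$. Let $\phi^F=\{\phi^F_m\}$ be the $\ell_2$-norm based classifier $\phi^F_m=\mathbb I\{F_n\ge 0\}$, where $$F_n=\Big\|\tfrac1n a^z-\tfrac1N a^x\Big\|_2^2-\Big\|\tfrac1n a^z-\tfrac1N a^y\Big\|_2^2 .$$ Then $J(\phi^F)=0$.
   Context: For each integer $m\ge1$ let $[m]=\{1,\dots,m\}$ be the alphabet. The sample sizes $N=N(m)$ and $n=n(m)$ are positive integers with $N,n\to\infty$ as $m\to\infty$. Fix constants $\varepsilon>0$ and $\bar c>0$ (a large positive constant). Let $\mathcal P_m$ be the set of pairs $(\pi,\mu)$ of probability distributions on $[m]$ with $\|\mu-\pi\|_1\ge\varepsilon$, $\max_j\pi_j\le \bar c/m$ and $\max_j\mu_j\le\bar c/m$. Two training sequences $X=(X_1,\dots,X_N)$ i.i.d. with marginal $\pi$ and $Y=(Y_1,\dots,Y_N)$ i.i.d. with marginal $\mu$, and a test sequence $Z=(Z_1,\dots,Z_n)$ i.i.d. with marginal $\nu$ are observed, the three sequences being independent; $\mathsf P_{(\pi,\mu,\nu)}$ denotes the corresponding probability. A classifier is a sequence $\phi=\{\phi_m\}$ of functions $\phi_m:[m]^N\times[m]^N\times[m]^n\to\{0,1\}$ (output $1$ means deciding that $Z$ comes from $\mu$). Its worst-case average probability of error is $$P_e(\phi_m)=\sup_{(\pi,\mu)\in\mathcal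 P_m}\Big[\tfrac12\mathsf P_{(\pi,\mu,\pi)}\{\phi_m=1\}+\tfrac12\mathsf P_{(\pi,\mu,\mu)}\{\phi_m=0\}\Big].$$ With $r(N,n,m)=\min\{N^2,Nn\}/m$, the generalized error exponent of $\phi$ is $J(\phi)=-\limsup_{m\to\infty}\frac{1}{r(N,n,m)}\log P_e(\phi_m)$. For $j\in[m]$, $a^x_j$, $a^y_j$, $a^z_j$ denote the number of times symbol $j$ appears in $X$, $Y$, $Z$ respectively, and $a^x=(a^x_j)_{j\in[m]}$ etc.; $\mathbb I$ is the indicator function. *)

From mathcomp Require Import all_boot all_order all_algebra.
From mathcomp Require Import all_classical all_reals all_analysis.
Set Implicit Arguments. Unset Strict Implicit. Unset Printing Implicit Defensive.
Import Order.TTheory GRing.Theory Num.Theory.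
Local Open Scope classical_set_scope.
Local Open Scope ring_scope.

(* A sequence of length L over the alphabet [m] = 'I_m (symbol j+1 <-> j). *)
Definition sample (L m : nat) := {ffun 'I_L -> 'I_m}.

Definition is_distr (R : realType) (m : nat) (p : 'I_m -> R) : Prop :=
  (forall j, 0 <= p j) /\ \sum_j p j = 1.

Definition seq_prob (R : realType) (m L : nat) (p : 'I_m -> R) (x : sample L m) : R :=
  \prod_(i < L) p (x i).

(* a classifier: for each m, a map [m]^N x [m]^N x [m]^n -> {0,1} (true = "from mu") *)
Definition classifier (N n : nat -> nat) :=
  forall m : nat, sample (N m) m -> sample (N m) m -> sample (n m) m -> bool.

Definition prob_event (R : realType) (m N n : nat) (pi mu nu : 'I_m -> R)
  (E : sample N m -> sample N m -> sample n m -> bool) : R :=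
  \sum_(x : sample N m) \sum_(y : sample N m) \sum_(z : sample n m)
     (if E x y z then seq_prob pi x * seq_prob mu y * seq_prob nu z else 0).

Definition admissible (R : realType) (m : nat) (eps cbar : R) (pi mu : 'I_m -> R) : Prop :=
  [/\ is_distr pi, is_distr mu, eps <= \sum_j `|mu j - pi j|,
      (forall j, pi j <= cbar / m%:R) & (forall j, mu j <= cbar / m%:R)].

Definition avg_err (R : realType) (N n : nat -> nat) (phi : classifier N n) (m : nat)
  (pi mu : 'I_m -> R) : R :=
  2^-1 * prob_event pi mu pi (fun x y z => phi m x y z)
  + 2^-1 * prob_event pi mu mu (fun x y z => ~~ phi m x y z).

(* worst-case average probability of error P_e(phi_m) (a bounded set, so sup is the true sup) *)
Definition Pe (R : realType) (eps cbar : R) (N n : nat -> nat) (phi : classifier N n)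
  (m : nat) : R :=
  sup [set e : R | exists pi mu : 'I_m -> R, admissible eps cbar pi mu /\ e = avg_err phi pi mu].

Definition rate (R : realType) (N n : nat -> nat) (m : nat) : R :=
  (minn (N m ^ 2) (N m * n m))%:R / m%:R.

(* (1/r) log P_e, with log 0 = -oo *)
Definition log_err_rate (R : realType) (eps cbar : R) (N n : nat -> nat)
  (phi : classifier N n) (m : nat) : \bar R :=
  let p := Pe eps cbar phi m in
  if 0 < p then (ln p / rate R N n m)%:E else -oo%E.

Definition J (R : realType) (eps cbar : R) (N n : nat -> nat) (phi : classifier N n) : \bar R :=
  (- limn_esup (log_err_rate eps cbar phi))%E.

Definition occ (L m : nat) (x : sample L m) (j : 'I_m) : nat := #|[set i | x i == j]|.

Definition Fstat (R : realType) (m N n : nat) (x y : sample N m) (z : sample n m) : R :=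
  \sum_j ((occ z j)%:R / n%:R - (occ x j)%:R / N%:R) ^+ 2
  - \sum_j ((occ z j)%:R / n%:R - (occ y j)%:R / N%:R) ^+ 2.

Definition phiF (R : realType) (N n : nat -> nat) : classifier N n :=
  fun m x y z => 0 <= Fstat R x y z.

(* As P_e <= 1, the normalized log-error (1/r) ln P_e is nonpositive, so it suffices to
   show ln P_e = o(r) with r = n^2/m.  Take pi and mu uniform on the two halves of the
   alphabet and a symbol s0 with pi(s0) >= 1/m.  With probability pi(s0)^k >= m^-k the
   first k letters of X are all s0, and then ||a^x||^2 >= k(k-1) + n, while the remaining
   terms of n^2 F_n have expectation at most 3 n^2 c, where c = 3/m bounds both
   distributions.  By Markov's inequality phi^F then errs on a test sample drawn from pi
   with probability at least 1/2 as soon as k(k-1) >= 6 n^2 c.  The least such k is of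
   order n / sqrt m, which gives P_e >= m^-k / 4 and
   |ln P_e| / r <= (k ln m + ln 4) m / n^2 = O(sqrt(m (ln n)^2 / n^2) + m / n^2) -> 0. *)

From mathcomp Require Import all_boot all_order all_algebra.
From mathcomp Require Import all_classical all_reals all_analysis.
From mathcomp Require Import ring lra zify.
Import Order.TTheory GRing.Theory Num.Theory numFieldNormedType.Exports.
Local Open Scope classical_set_scope.
Local Open Scope ring_scope.
Set Implicit Arguments. Unset Strict Implicit. Unset Printing Implicit Defensive.

Section SampleExpectation.
Variables (R : realType) (L m : nat).
Implicit Types (p : 'I_m -> R) (x : sample L m) (f : sample L m -> R).

Definition expect p f := \sum_(x : sample L m) seq_prob p x * f x.

Lemma seq_prob_ge0 p x : (forall j, 0 <= p j) -> 0 <= seq_prob p x.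
Proof. by move=> p_ge0; apply: prodr_ge0 => i _. Qed.

Lemma expect_ge0 p f : (forall j, 0 <= p j) -> (forall x, 0 <= f x) -> 0 <= expect p f.
Proof. by move=> p_ge0 f_ge0; apply: sumr_ge0 => x _; rewrite mulr_ge0 ?seq_prob_ge0. Qed.

Lemma expect_sum p (I : finType) (F : I -> sample L m -> R) :
  expect p (fun x => \sum_i F i x) = \sum_i expect p (F i).
Proof. by rewrite /expect exchange_big; apply: eq_bigr => x _; rewrite big_distrr. Qed.

Lemma expect_prod p (F : 'I_L -> 'I_m -> R) :
  expect p (fun x => \prod_i F i (x i)) = \prod_i \sum_j p j * F i j.
Proof.
by rewrite /expect bigA_distr_bigA; apply: eq_bigr => x _; rewrite -big_split.
Qed.

Lemma expect_prod_indicator p (P : pred 'I_L) j : is_distr p ->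
  expect p (fun x => \prod_(i | P i) ((x i == j)%:R : R)) = p j ^+ #|P|.
Proof.
move=> [_ p_sum1].
pose F i (v : 'I_m) : R := if P i then (v == j)%:R else 1.
have -> : (fun x => \prod_(i | P i) ((x i == j)%:R : R)) = fun x => \prod_i F i (x i).
  by apply: funext => x; rewrite big_mkcond.
rewrite expect_prod -prodr_const [RHS]big_mkcond; apply: eq_bigr => i _.
rewrite /F unfold_in; case: (P i); last by under eq_bigr do rewrite mulr1.
rewrite (bigD1 j) //= eqxx mulr1 big1 ?addr0 // => v /negbTE ->; exact: mulr0.
Qed.

Lemma sum_seq_prob p : is_distr p -> \sum_(x : sample L m) seq_prob p x = 1.
Proof.
move=> [_ p_sum1]; have := expect_prod p (fun _ _ => 1).
rewrite /expect (eq_bigr (seq_prob p)) => [->|x _]; last by rewrite big1 ?mulr1.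
by apply: big1 => i _; under eq_bigr do rewrite mulr1.
Qed.

Lemma expect_cst p a : is_distr p -> expect p (fun _ => a) = a.
Proof. by move=> p_distr; rewrite /expect -big_distrl /= sum_seq_prob // mul1r. Qed.

Lemma expect_indicator p i j : is_distr p -> expect p (fun x => ((x i == j)%:R : R)) = p j.
Proof.
move=> p_distr; rewrite -[RHS]expr1 -(card1 i) -(expect_prod_indicator _ _ p_distr).
by congr expect; apply: funext => x; rewrite big_pred1_eq.
Qed.

Lemma expect_indicator2 p i l j : i != l -> is_distr p ->
  expect p (fun x => ((x i == j)%:R * (x l == j)%:R : R)) = p j ^+ 2.
Proof.
move=> il p_distr; have := expect_prod_indicator (pred2 i l) j p_distr.
rewrite card2 il => <-; congr expect; apply: funext => x.
rewrite (bigD1 i) ?inE ?eqxx //= (bigD1 l) /=; last by rewrite eq_sym il eqxx orbT.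
by rewrite big1 ?mulr1 // => v /andP[/andP[/orP[]/eqP-> ]]; rewrite ?eqxx.
Qed.

Lemma expect_subr p f a : is_distr p -> expect p (fun x => f x - a) = expect p f - a.
Proof.
move=> p_distr; rewrite /expect; under eq_bigr do rewrite mulrBr.
by rewrite sumrB -big_distrl /= sum_seq_prob // mul1r.
Qed.

End SampleExpectation.

Section OccurrenceCounts.
Variables (R : realType) (L m : nat).
Implicit Types (p : 'I_m -> R) (x : sample L m).

Definition occ_norm2 x : R := \sum_j (occ x j)%:R ^+ 2.

Definition occ_dot x (z : sample L m) : R := \sum_j (occ x j)%:R * (occ z j)%:R.

Lemma occE x j : occ x j = (\sum_i (x i == j))%N.
Proof.
(* [occ] counts the elements of a classical set, whose membership goes through [asbool]. *)
rewrite /occ -sum1_card big_mkcond; apply: eq_bigr => i _.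
by rewrite /in_mem /= /in_set asboolb; case: (_ == _).
Qed.

Lemma occR x j : (occ x j)%:R = \sum_i ((x i == j)%:R : R).
Proof. by rewrite occE natr_sum. Qed.

Lemma sum_occ x : (\sum_j occ x j)%N = L.
Proof.
under eq_bigr do rewrite occE.
rewrite exchange_big /= -[RHS]card_ord -sum1_card; apply: eq_bigr => i _.
by rewrite (bigD1 (x i)) //= eqxx big1 // => j /negbTE; rewrite eq_sym => ->.
Qed.

Lemma occ_norm2_ge x : L%:R <= occ_norm2 x.
Proof.
rewrite /occ_norm2 -[X in X%:R](sum_occ x) natr_sum; apply: ler_sum => j _.
by rewrite -natrX ler_nat; case: (occ x j) => // a; rewrite expnS leq_pmulr.
Qed.

Lemma occ_dot_ge0 x z : 0 <= occ_dot x z.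
Proof. by apply: sumr_ge0 => j _; apply: mulr_ge0. Qed.

Lemma expect_occ p j : is_distr p -> expect p (fun x => (occ x j)%:R) = L%:R * p j.
Proof.
move=> p_distr; under [X in expect _ X]funext do rewrite occR.
rewrite expect_sum; under eq_bigr do rewrite expect_indicator //.
by rewrite sumr_const card_ord mulr_natl.
Qed.

Lemma expect_occ_norm2 p c : is_distr p -> 0 <= c -> (forall j, p j <= c) ->
  expect p occ_norm2 <= L%:R + L%:R ^+ 2 * c.
Proof.
move=> p_distr c_ge0 p_le; have [p_ge0 p_sum1] := p_distr.
have -> : occ_norm2 = fun x => \sum_j \sum_i \sum_l ((x i == j)%:R * (x l == j)%:R).
  apply: funext => x; apply: eq_bigr => j _.
  by rewrite occR expr2 mulr_suml; apply: eq_bigr => i _; rewrite mulr_sumr.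
rewrite expect_sum.
apply: (@le_trans _ _ (\sum_j \sum_(i < L) \sum_(l < L) p j * ((i == l)%:R + c))).
  apply: ler_sum => j _; rewrite !expect_sum; apply: ler_sum => i _; rewrite expect_sum.
  apply: ler_sum => l _; case: (eqVneq i l) => [<-|il].
    have -> : (fun x : sample L m => ((x i == j)%:R * (x i == j)%:R : R)) =
              (fun x => (x i == j)%:R) by apply: funext => x; case: (_ == _); rewrite ?mulr1 ?mulr0.
    by rewrite expect_indicator // ler_peMr // lerDl.
  by rewrite expect_indicator2 // add0r expr2 ler_wpM2l.
have sum_eq1 (i : 'I_L) : \sum_l ((i == l)%:R : R) = 1.
  by rewrite (bigD1 i) //= eqxx big1 ?addr0 // => l /negbTE; rewrite eq_sym => ->.
under eq_bigr do under eq_bigr do rewrite -mulr_sumr big_split /= sum_eq1 sumr_const card_ord.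
under eq_bigr do rewrite -mulr_sumr.
rewrite -mulr_suml p_sum1 mul1r sumr_const card_ord -mulr_natl -[c *+ L]mulr_natl.
by rewrite le_eqVlt; apply/orP; left; apply/eqP; ring.
Qed.

Lemma Fstat_scaled x y z : (0 < L)%N ->
  L%:R ^+ 2 * Fstat R x y z = occ_norm2 x - occ_norm2 y - 2 * occ_dot x z + 2 * occ_dot y z.
Proof.
move=> L_gt0; have L_neq0 : (L%:R : R) != 0 by rewrite pnatr_eq0 -lt0n.
rewrite /Fstat /occ_norm2 /occ_dot mulrBr !big_distrr /= -!sumrB -big_split /=.
by apply: eq_bigr => j _; field.
Qed.

End OccurrenceCounts.

Section TripleExpectation.
Variables (R : realType) (m N n : nat) (pi mu nu : 'I_m -> R).
Implicit Types (G : sample N m -> sample N m -> sample n m -> R)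
  (E : sample N m -> sample N m -> sample n m -> bool).

Definition expect3 G := \sum_(x : sample N m) \sum_(y : sample N m) \sum_(z : sample n m)
  seq_prob pi x * seq_prob mu y * seq_prob nu z * G x y z.

Lemma prob_eventE E :
  prob_event pi mu nu E = expect3 (fun x y z => (E x y z)%:R).
Proof.
apply: eq_bigr => x _; apply: eq_bigr => y _; apply: eq_bigr => z _.
by case: (E x y z); rewrite ?mulr1 ?mulr0.
Qed.

Lemma expect3_prod f g h :
  expect3 (fun x y z => f x * g y * h z) = expect pi f * expect mu g * expect nu h.
Proof.
rewrite /expect3 /expect -mulrA big_distrl /=; apply: eq_bigr => x _.
rewrite big_distrl big_distrr /=; apply: eq_bigr => y _.
by rewrite !big_distrr /=; apply: eq_bigr => z _; ring.
Qed.

Lemma expect3_lin a b G1 G2 :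
  expect3 (fun x y z => a * G1 x y z + b * G2 x y z) = a * expect3 G1 + b * expect3 G2.
Proof.
rewrite /expect3 [a * _]mulr_sumr [b * _]mulr_sumr -[RHS]big_split; apply: eq_bigr => x _.
rewrite [a * _]mulr_sumr [b * _]mulr_sumr -[RHS]big_split; apply: eq_bigr => y _.
rewrite [a * _]mulr_sumr [b * _]mulr_sumr -[RHS]big_split; by apply: eq_bigr => z _ /=; ring.
Qed.

Lemma expect3_sum (I : finType) (G : I -> sample N m -> sample N m -> sample n m -> R) :
  expect3 (fun x y z => \sum_i G i x y z) = \sum_i expect3 (G i).
Proof.
rewrite /expect3 [RHS]exchange_big; apply: eq_bigr => x _.
rewrite [RHS]exchange_big; apply: eq_bigr => y _.
by rewrite [RHS]exchange_big; apply: eq_bigr => z _; rewrite big_distrr.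
Qed.

Hypotheses (pi_distr : is_distr pi) (mu_distr : is_distr mu) (nu_distr : is_distr nu).

Lemma expect3_le G1 G2 : (forall x y z, G1 x y z <= G2 x y z) -> expect3 G1 <= expect3 G2.
Proof.
have [[pi_ge0 _] [mu_ge0 _] [nu_ge0 _]] := And3 pi_distr mu_distr nu_distr.
move=> G12; apply: ler_sum => x _; apply: ler_sum => y _; apply: ler_sum => z _.
by rewrite ler_wpM2l ?mulr_ge0 ?seq_prob_ge0.
Qed.

Lemma prob_event_ge0 E : 0 <= prob_event pi mu nu E.
Proof.
have [[pi_ge0 _] [mu_ge0 _] [nu_ge0 _]] := And3 pi_distr mu_distr nu_distr.
apply: sumr_ge0 => x _; apply: sumr_ge0 => y _; apply: sumr_ge0 => z _.
by case: (E x y z); rewrite ?mulr_ge0 ?seq_prob_ge0.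
Qed.

Lemma prob_event_le1 E : prob_event pi mu nu E <= 1.
Proof.
rewrite prob_eventE (@le_trans _ _ (expect3 (fun _ _ _ => 1 * 1 * 1))) ?expect3_le //.
  by move=> x y z; rewrite !mul1r lern1 leq_b1.
by rewrite expect3_prod !expect_cst ?mul1r.
Qed.

End TripleExpectation.

Section PrefixEvent.
Variables (R : realType) (n m : nat) (pi mu : 'I_m -> R) (c : R) (k : nat) (s0 : 'I_m).
Hypotheses (pi_distr : is_distr pi) (mu_distr : is_distr mu).
Hypotheses (pi_le : forall j, pi j <= c) (mu_le : forall j, mu j <= c).
Hypotheses (k_le_n : (k <= n)%N) (n_gt0 : (0 < n)%N) (c_gt0 : 0 < c).
Implicit Types x y z : sample n m.

Definition prefix_const x := [forall i : 'I_n, (i < k)%N ==> (x i == s0)].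

Definition Fstat_noise x y z : R := occ_norm2 R y - n%:R + 2 * occ_dot R x z.

Lemma expect_prefix_const : expect pi (fun x => ((prefix_const x)%:R : R)) = pi s0 ^+ k.
Proof.
have -> : (fun x => ((prefix_const x)%:R : R)) =
          (fun x => \prod_(i < n | (i < k)%N) ((x i == s0)%:R : R)).
  apply: funext => x; case: (boolP (prefix_const x)) => [/forallP x_pre|/forallPn[i]].
    by rewrite big1 // => i lt_ik; move: (x_pre i); rewrite lt_ik => /eqP->; rewrite eqxx.
  by rewrite negb_imply => /andP[lt_ik /negbTE xi]; rewrite (bigD1 i) //= xi mul0r.
rewrite expect_prod_indicator //; congr (_ ^+ _).
by rewrite -sum1_card -(big_ord_widen n (fun _ => 1%N) k_le_n) sum1_card card_ord.
Qed.

Lemma occ_prefix_ge x : prefix_const x -> (k <= occ x s0)%N.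
Proof.
move=> /forallP x_pre; rewrite occE.
rewrite -[k in (k <= _)%N]card_ord -sum1_card (big_ord_widen n (fun _ => 1%N) k_le_n) big_mkcond.
by apply: leq_sum => i _; case: ifP => // lt_ik; move: (x_pre i); rewrite lt_ik => /= ->.
Qed.

Lemma occ_norm2_prefix_ge x : prefix_const x -> (k * (k - 1))%:R + n%:R <= occ_norm2 R x.
Proof.
move=> x_pre; have k_le := occ_prefix_ge x_pre.
rewrite /occ_norm2 -natrD; under eq_bigr do rewrite -natrX; rewrite -natr_sum ler_nat.
rewrite -[X in (_ + X <= _)%N](sum_occ x) (bigD1 s0) //= [X in (_ <= X)%N](bigD1 s0) //=.
have : (\sum_(j | j != s0) occ x j <= \sum_(j | j != s0) occ x j ^ 2)%N.
  by apply: leq_sum => j _; case: (occ x j) => // a; rewrite expnS leq_pmulr.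
have : (k * (k - 1) <= occ x s0 * (occ x s0 - 1))%N by rewrite leq_mul // leq_sub2r.
move: k_le; set a := occ x s0; set S1 := (\sum_(j | _) _)%N; set S2 := (\sum_(j | _) _)%N.
nia.
Qed.

Lemma Fstat_noise_ge0 x y z : 0 <= Fstat_noise x y z.
Proof. by have := occ_norm2_ge R y; have := occ_dot_ge0 R x z; rewrite /Fstat_noise; lra. Qed.

Lemma Fstat_prefix_lb x y z : prefix_const x ->
  (k * (k - 1))%:R - Fstat_noise x y z <= n%:R ^+ 2 * Fstat R x y z.
Proof.
move=> x_pre; have := occ_norm2_prefix_ge x_pre; have := occ_dot_ge0 R y z.
by rewrite Fstat_scaled // /Fstat_noise; lra.
Qed.

Lemma expect3_prefix_noise :
  expect3 pi mu pi (fun x y z => (prefix_const x)%:R * Fstat_noise x y z) <=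
  3 * n%:R ^+ 2 * c * pi s0 ^+ k.
Proof.
have [pi_ge0 _] := pi_distr.
pose A x : R := (prefix_const x)%:R.
have -> : (fun x y z => A x * Fstat_noise x y z) = (fun x y z =>
    1 * (A x * (occ_norm2 R y - n%:R) * 1) + 2 * \sum_j A x * (occ x j)%:R * 1 * (occ z j)%:R).
  apply: funext => x; apply: funext => y; apply: funext => z.
  rewrite /Fstat_noise /occ_dot; under [X in _ = _ + 2 * X]eq_bigr do rewrite mulr1 -mulrA.
  by rewrite mulrDr mulrCA big_distrr /= mulr1 mul1r.
rewrite expect3_lin expect3_sum expect3_prod expect_subr // expect_prefix_const expect_cst //.
under eq_bigr do rewrite expect3_prod expect_cst // expect_occ // mulr1.
have EA_ge0 : 0 <= pi s0 ^+ k := exprn_ge0 k (pi_ge0 s0).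
have sum_Aocc : \sum_j expect pi (fun x => A x * (occ x j)%:R) = n%:R * pi s0 ^+ k.
  rewrite -expect_sum -expect_prefix_const /expect mulr_sumr; apply: eq_bigr => x _.
  by rewrite -mulr_sumr -natr_sum sum_occ; ring.
have cross_le : \sum_j expect pi (fun x => A x * (occ x j)%:R) * (n%:R * pi j) <=
                n%:R ^+ 2 * c * pi s0 ^+ k.
  rewrite (@le_trans _ _ (\sum_j expect pi (fun x => A x * (occ x j)%:R) * (n%:R * c))) //.
    apply: ler_sum => j _; rewrite ler_wpM2l ?ler_wpM2l ?expect_ge0 // => x.
    exact: mulr_ge0.
  by rewrite -mulr_suml sum_Aocc le_eqVlt; apply/orP; left; apply/eqP; ring.
have norm2_le :
    pi s0 ^+ k * (expect mu (@occ_norm2 R n m) - n%:R) <= pi s0 ^+ k * (n%:R ^+ 2 * c).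
  by rewrite ler_wpM2l // lerBlDl expect_occ_norm2 // ltW.
lra.
Qed.

Hypothesis k_large : 6 * n%:R ^+ 2 * c <= (k * (k - 1))%:R.

Let D : R := 6 * n%:R ^+ 2 * c.

Let D_gt0 : 0 < D.
Proof. by rewrite /D !mulr_gt0 ?exprn_gt0 ?ltr0n. Qed.

(* Markov's inequality, pointwise: on a constant prefix, [F_n < 0] forces the noise above [D]. *)
Lemma phiF_ge_prefix x y z :
  (prefix_const x)%:R * (1 - Fstat_noise x y z / D) <= ((0 <= Fstat R x y z)%R)%:R.
Proof.
have noise_ge0 : 0 <= Fstat_noise x y z / D by rewrite divr_ge0 ?Fstat_noise_ge0 ?ltW ?D_gt0.
case: (boolP (prefix_const x)) => x_pre; last by rewrite mul0r.
rewrite mul1r; case: (boolP (0 <= Fstat R x y z)) => [_|]; first by rewrite /=; lra.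
rewrite -ltNge => F_lt0 /=.
have : n%:R ^+ 2 * Fstat R x y z < 0 by rewrite pmulr_rlt0 // exprn_gt0 // ltr0n.
have := Fstat_prefix_lb y z x_pre.
rewrite subr_le0 ler_pdivlMr ?D_gt0 // mul1r /D.
by move: k_large; set K := ((k * (k - 1))%:R : R); lra.
Qed.

Lemma prob_phiF_ge :
  pi s0 ^+ k / 2 <= prob_event pi mu pi (fun x y z => 0 <= Fstat R x y z).
Proof.
rewrite prob_eventE; apply: le_trans (expect3_le pi_distr mu_distr pi_distr phiF_ge_prefix).
pose A x : R := (prefix_const x)%:R.
have -> : (fun x y z => A x * (1 - Fstat_noise x y z / D)) =
          (fun x y z => 1 * (A x * 1 * 1) + (- D^-1) * (A x * Fstat_noise x y z)).
  by apply: funext => x; apply: funext => y; apply: funext => z; rewrite /=; ring.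
rewrite expect3_lin expect3_prod expect_prefix_const !expect_cst //.
have : D^-1 * expect3 pi mu pi (fun x y z => A x * Fstat_noise x y z) <= pi s0 ^+ k / 2.
  rewrite -ler_pdivlMl ?invr_gt0 // invrK (le_trans expect3_prefix_noise) //.
  by rewrite le_eqVlt; apply/orP; left; apply/eqP; rewrite /D; field.
lra.
Qed.

End PrefixEvent.

Lemma sum_ord_lt (R : pzRingType) m h (a : R) : (h <= m)%N ->
  \sum_(j < m) (if (j < h)%N then a else 0) = h%:R * a.
Proof.
move=> h_le_m; rewrite -big_mkcond -(big_ord_widen m (fun _ => a) h_le_m).
by rewrite sumr_const card_ord mulr_natl.
Qed.

Lemma sum_ord_ge (R : pzRingType) m h (a : R) : (h <= m)%N ->
  \sum_(j < m) (if (h <= j)%N then a else 0) = (m - h)%:R * a.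
Proof.
move=> h_le_m.
have -> : \sum_(j < m) (if (h <= j)%N then a else 0) =
          \sum_(j < m) a - \sum_(j < m) (if (j < h)%N then a else 0).
  rewrite -sumrB; apply: eq_bigr => j _.
  by rewrite leqNgt; case: (j < h)%N; rewrite ?subrr ?subr0.
by rewrite sum_ord_lt // sumr_const card_ord natrB // mulrBl !mulr_natl.
Qed.

Lemma split_uniform_pair (R : realType) m (eps cbar : R) :
  (1 < m)%N -> eps <= 2 -> 3 <= cbar ->
  exists (pi mu : 'I_m -> R) (s0 : 'I_m), [/\ admissible eps cbar pi mu,
    (forall j, pi j <= 3 / m%:R), (forall j, mu j <= 3 / m%:R) & m%:R^-1 <= pi s0].
Proof.
move=> m_gt1 eps_le2 cbar_ge3; pose h := (m %/ 2)%N.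
have h_gt0 : (0 < h)%N by rewrite /h; lia.
have h_le_m : (h <= m)%N by rewrite /h; lia.
have m_le_3h : (m <= 3 * h)%N by rewrite /h; lia.
have h_le_mh : (h <= m - h)%N by rewrite /h; lia.
have hR : 0 < h%:R :> R by rewrite ltr0n.
have mhR : 0 < (m - h)%:R :> R by rewrite ltr0n; lia.
have mR : 0 < m%:R :> R by rewrite ltr0n; lia.
pose pi (j : 'I_m) : R := if (j < h)%N then h%:R^-1 else 0.
pose mu (j : 'I_m) : R := if (h <= j)%N then (m - h)%:R^-1 else 0.
have m_gt0 : (0 < m)%N by lia.
have pi_le : h%:R^-1 <= 3 / m%:R :> R.
  by rewrite ler_pdivlMr // mulrC ler_pdivrMr // -[3]/(3%:R) -natrM ler_nat.
have mu_le : (m - h)%:R^-1 <= h%:R^-1 :> R by rewrite lef_pV2 ?posrE // ler_nat.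
have pi_le3 j : pi j <= 3 / m%:R by rewrite /pi; case: ifP => _; rewrite ?pi_le ?divr_ge0 ?ltW.
have mu_le3 j : mu j <= 3 / m%:R.
  by rewrite /mu; case: ifP => _; [exact: le_trans mu_le pi_le | rewrite divr_ge0 ?ltW].
have le_cbar : 3 / m%:R <= cbar / m%:R by rewrite ler_pM2r ?invr_gt0.
exists pi, mu, (Ordinal m_gt0); split => //; last first.
  by rewrite /pi /= h_gt0 lef_pV2 ?posrE // ler_nat.
split; last 2 first.
- by move=> j; exact: le_trans (pi_le3 j) le_cbar.
- by move=> j; exact: le_trans (mu_le3 j) le_cbar.
- split; first by move=> j; rewrite /pi; case: ifP => _; rewrite // invr_ge0 ltW.
  by rewrite /pi sum_ord_lt // mulfV // gt_eqF.
- split; first by move=> j; rewrite /mu; case: ifP => _; rewrite // invr_ge0 ltW.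
  by rewrite /mu sum_ord_ge // mulfV // gt_eqF.
- rewrite (le_trans eps_le2) //.
  have -> : \sum_j `|mu j - pi j| = \sum_j pi j + \sum_j mu j.
    rewrite -big_split; apply: eq_bigr => j _; rewrite /pi /mu leqNgt.
    by case: (j < h)%N => /=; rewrite ?sub0r ?subr0 ?normrN ?add0r ?addr0 gtr0_norm // invr_gt0.
  by rewrite /pi /mu sum_ord_lt // sum_ord_ge // !mulfV ?gt_eqF.
Qed.

Section WorstCaseError.
Variables (R : realType) (eps cbar : R) (N n : nat -> nat) (phi : classifier N n) (m : nat).

Lemma avg_err_le1 (pi mu : 'I_m -> R) : is_distr pi -> is_distr mu -> avg_err phi pi mu <= 1.
Proof.
move=> pi_distr mu_distr; rewrite /avg_err.
have := prob_event_le1 pi_distr mu_distr pi_distr (fun x y z => @phi m x y z).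
have := prob_event_le1 pi_distr mu_distr mu_distr (fun x y z => ~~ @phi m x y z).
lra.
Qed.

Let errors := [set e : R | exists pi mu : 'I_m -> R,
  admissible eps cbar pi mu /\ e = avg_err phi pi mu].

Let errors_ub : ubound errors 1.
Proof. by move=> e [pi [mu [[pi_distr mu_distr _ _ _] ->]]]; exact: avg_err_le1. Qed.

Lemma avg_err_le_Pe (pi mu : 'I_m -> R) :
  admissible eps cbar pi mu -> avg_err phi pi mu <= Pe eps cbar phi m.
Proof.
by move=> adm; apply: ub_le_sup; [exists 1; exact: errors_ub | exists pi, mu].
Qed.

Lemma Pe_le1 : (exists pi mu : 'I_m -> R, admissible eps cbar pi mu) -> Pe eps cbar phi m <= 1.
Proof.
by move=> [pi [mu adm]]; apply: ge_sup; [exists (avg_err phi pi mu), pi, mu | exact: errors_ub].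
Qed.

End WorstCaseError.

Lemma Pe_phiF_ge (R : realType) (eps cbar : R) (n : nat -> nat) m k :
  (1 < m)%N -> eps <= 2 -> 3 <= cbar -> (0 < n m)%N -> (k <= n m)%N ->
  6 * (n m)%:R ^+ 2 * (3 / m%:R) <= (k * (k - 1))%:R :> R ->
  m%:R^-1 ^+ k / 4 <= Pe eps cbar (@phiF R n n) m.
Proof.
move=> m_gt1 eps_le2 cbar_ge3 n_gt0 k_le_n k_large.
have [pi [mu [s0 [adm pi_le mu_le pi_s0]]]] := split_uniform_pair m_gt1 eps_le2 cbar_ge3.
have [pi_distr mu_distr _ _ _] := adm.
apply: le_trans _ (avg_err_le_Pe (@phiF R n n) adm); rewrite /avg_err.
have c_gt0 : 0 < 3 / m%:R :> R by rewrite divr_gt0 // ltr0n; lia.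
have := prob_phiF_ge s0 pi_distr mu_distr pi_le mu_le k_le_n n_gt0 c_gt0 k_large.
have := prob_event_ge0 pi_distr mu_distr mu_distr (fun x y z => ~~ @phiF R n n m x y z).
have : m%:R^-1 ^+ k <= pi s0 ^+ k.
  by apply: lerXn2r; rewrite ?nnegrE ?invr_ge0 // (le_trans _ pi_s0) ?invr_ge0.
rewrite /phiF; lra.
Qed.

Lemma choose_prefix_length n m : (72 <= m)%N -> (2 <= n)%N ->
  exists k, [/\ (2 <= k)%N, (k <= n)%N, (18 * n ^ 2 <= (k - 1) ^ 2 * m)%N
             & ((k - 2) ^ 2 * m < 18 * n ^ 2)%N].
Proof.
move=> m_ge72 n_ge2.
have Pn : (18 * n ^ 2 <= (n - 1) ^ 2 * m)%N by nia.
have [k Pk k_min] := find_ex_minn (ex_intro (fun k => (18 * n ^ 2 <= (k - 1) ^ 2 * m)%N) n Pn).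
have k_ge2 : (2 <= k)%N by case: k Pk {k_min} => [|[|k]] //=; rewrite ?sub0n ?subnn; nia.
exists k; split => //; first exact: k_min.
rewrite ltnNge; apply/negP => P_km1.
have : (k <= k - 1)%N by apply: k_min; rewrite (_ : (k - 1 - 1 = k - 2)%N) //; lia.
lia.
Qed.

Lemma ln_ge_of_pow_le (R : realType) (M P : R) k :
  1 <= M -> M^-1 ^+ k / 4 <= P -> - (k%:R * ln M + ln 4) <= ln P.
Proof.
move=> M_ge1 P_ge; have M_gt0 : 0 < M by lra.
have lb_gt0 : 0 < M^-1 ^+ k / 4 by rewrite divr_gt0 // exprn_gt0 // invr_gt0.
have P_gt0 : 0 < P := lt_le_trans lb_gt0 P_ge.
move: P_ge; rewrite -ler_ln ?posrE //.
rewrite lnM ?posrE ?exprn_gt0 ?invr_gt0 // lnXn ?invr_gt0 // !lnV ?posrE //.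
by rewrite mulNrn -mulr_natl; lra.
Qed.

Lemma prefix_cost_le (R : rcfType) (K L lm q : R) :
  2 <= K -> 0 <= L -> 0 <= lm <= 2 * L -> 0 <= q -> (K - 2) ^+ 2 * q <= 18 ->
  K * lm * q <= Num.sqrt (72 * (L ^+ 2 * q)) + 4 * (L ^+ 2 * q + q).
Proof.
move=> K_ge2 L_ge0 /andP[lm_ge0 lm_le] q_ge0 Kq_le.
pose a := (K - 2) * (2 * L) * q.
have a_le : a <= Num.sqrt (72 * (L ^+ 2 * q)).
  have a_ge0 : 0 <= a by rewrite /a !mulr_ge0 //; lra.
  have L2q_ge0 : 0 <= L ^+ 2 * q by rewrite mulr_ge0 // sqr_ge0.
  rewrite -(ger0_norm a_ge0) -sqrtr_sqr ler_sqrt; last by rewrite mulr_ge0.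
  have -> : a ^+ 2 = 4 * (L ^+ 2 * q) * ((K - 2) ^+ 2 * q) by rewrite /a; ring.
  have := ler_wpM2l (mulr_ge0 (ler0n _ 4) L2q_ge0) Kq_le; lra.
have lm_part : (K - 2) * lm * q <= a by rewrite ler_wpM2r // ler_wpM2l //; lra.
have L_part : L * q <= L ^+ 2 * q + q.
  by rewrite -[X in _ + X]mul1r -mulrDl ler_wpM2r //; nra.
have two_part : 2 * lm * q <= 4 * (L * q) by have := ler_wpM2r q_ge0 lm_le; lra.
have -> : K * lm * q = (K - 2) * lm * q + 2 * lm * q by ring.
lra.
Qed.

Definition rate_bound (R : realType) (q U : R) : R :=
  Num.sqrt (72 * U) + 4 * (U + q) + ln 4 * q.

Lemma rate_bound_cvg0 (R : realType) (q U : nat -> R) :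
  q @ \oo --> 0 -> U @ \oo --> 0 -> (fun m => rate_bound (q m) (U m)) @ \oo --> 0.
Proof.
move=> q_cvg0 U_cvg0.
have -> : 0 = rate_bound 0 (0 : R) by rewrite /rate_bound !(mulr0, addr0) sqrtr0.
rewrite /rate_bound; apply: cvgD; [apply: cvgD|exact: cvgMl_tmp].
  by apply: continuous_cvg => //; [exact: sqrt_continuous | exact: cvgMl_tmp].
by apply: cvgMl_tmp; exact: cvgD.
Qed.

Lemma Pe_phiF_bounds (R : realType) (eps cbar : R) (n : nat -> nat) m :
  (72 <= m)%N -> (m < n m ^ 2)%N -> eps <= 2 -> 3 <= cbar ->
  exists k, [/\ (2 <= k)%N, ((k - 2) ^ 2 * m < 18 * n m ^ 2)%N,
    m%:R^-1 ^+ k / 4 <= Pe eps cbar (@phiF R n n) m & Pe eps cbar (@phiF R n n) m <= 1].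
Proof.
move=> m_ge72 m_lt eps_le2 cbar_ge3.
have n_ge2 : (2 <= n m)%N by nia.
have m_gt1 : (1 < m)%N by lia.
have [k [k_ge2 k_le_n k_large k_small]] := choose_prefix_length m_ge72 n_ge2.
have k_large_R : 6 * (n m)%:R ^+ 2 * (3 / m%:R) <= (k * (k - 1))%:R :> R.
  rewrite mulrA ler_pdivrMr ?ltr0n; last lia.
  rewrite -[6]/(6%:R) -[3]/(3%:R) -!natrX -!natrM ler_nat; nia.
exists k; split => //; first exact: Pe_phiF_ge m_gt1 eps_le2 cbar_ge3 (ltnW n_ge2) k_le_n k_large_R.
have [pi [mu [s0 [adm _ _ _]]]] := split_uniform_pair (R := R) m_gt1 eps_le2 cbar_ge3.
by apply: Pe_le1; exists pi, mu.
Qed.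

Lemma log_err_rate_phiF_bounds (R : realType) (eps cbar : R) (n : nat -> nat) m :
  (72 <= m)%N -> (m < n m ^ 2)%N -> eps <= 2 -> 3 <= cbar ->
  let q : R := m%:R / (n m)%:R ^+ 2 in
  let U : R := m%:R * ln ((n m)%:R : R) ^+ 2 / (n m)%:R ^+ 2 in
  let u := log_err_rate eps cbar (@phiF R n n) m in
  u \is a fin_num /\ - rate_bound q U <= fine u <= 0.
Proof.
move=> m_ge72 m_lt eps_le2 cbar_ge3 q U u.
have [k [k_ge2 k_small P_ge P_le1]] := Pe_phiF_bounds m_ge72 m_lt eps_le2 cbar_ge3.
set P := Pe eps cbar (@phiF R n n) m in P_ge P_le1 *.
have m_ge1 : 1 <= m%:R :> R by rewrite ler1n; lia.
have n_gt0 : 0 < (n m)%:R :> R by rewrite ltr0n; nia.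
have q_ge0 : 0 <= q by rewrite divr_ge0 // ltW // exprn_gt0.
have P_gt0 : 0 < P by apply: lt_le_trans P_ge; rewrite divr_gt0 // exprn_gt0 // invr_gt0; lra.
have -> : u = (ln P * q)%:E.
  by rewrite /u /log_err_rate -/P P_gt0 /rate mulnn minnn natrX invf_div.
split => //=; apply/andP; split; last by rewrite mulr_le0_ge0 // ln_le0.
have ln_m_le : 0 <= ln (m%:R : R) <= 2 * ln ((n m)%:R : R).
  rewrite ln_ge0 //= -[2]/(2%:R) mulr_natl -lnXn //.
  have : (m%:R : R) <= (n m ^ 2)%:R by rewrite ler_nat ltnW.
  by rewrite natrX ler_ln ?posrE ?exprn_gt0; lra.
have k_small_R : (k%:R - 2) ^+ 2 * q <= 18.
  rewrite /q mulrA ler_pdivrMr ?exprn_gt0 // -[2]/(2%:R) -natrB //.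
  by rewrite -[18]/(18%:R) -!natrX -!natrM ler_nat ltnW.
have k_ge2_R : 2 <= k%:R :> R by rewrite -[2]/(2%:R) ler_nat.
have ln_n_ge0 : 0 <= ln ((n m)%:R : R) by rewrite ln_ge0 // ler1n -(ltr0n R).
have := prefix_cost_le k_ge2_R ln_n_ge0 ln_m_le q_ge0 k_small_R.
have := ler_wpM2r q_ge0 (ln_ge_of_pow_le m_ge1 P_ge).
have -> : U = ln ((n m)%:R : R) ^+ 2 * q by rewrite /U /q; ring.
rewrite /rate_bound; lra.
Qed.

Theorem theorem4 (R : realType) (n : nat -> nat) :
  (forall m, (0 < n m)%N) ->
  (fun m => (n m)%:R / m%:R : R^o) @ \oo --> 0%R ->
  (fun m => m%:R / (n m)%:R ^+ 2 : R^o) @ \oo --> 0%R ->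
  (fun m => m%:R * (ln ((n m)%:R : R)) ^+ 2 / (n m)%:R ^+ 2 : R^o) @ \oo --> 0%R ->
  forall eps : R, 0 < eps < 2 ->
  exists c0 : R, forall cbar : R, c0 <= cbar ->
    J eps cbar (@phiF R n n) = 0%E.
Proof.
move=> n_gt0 _ q_cvg0 U_cvg0 eps /andP[_ eps_lt2]; exists 3 => cbar cbar_ge3.
set u := log_err_rate eps cbar (@phiF R n n).
suff u_cvg0 : u @ \oo --> 0%E by rewrite /J (cvg_limn_einf_sup u_cvg0).2 oppe0.
have m_large : \forall m \near \oo, (72 <= m)%N /\ (m < n m ^ 2)%N.
  near=> m; split; first by near: m; exact: nbhs_infty_ge.
  have : m%:R / (n m)%:R ^+ 2 < 1 :> R by near: m; exact: (cvgr_lt 0%R q_cvg0).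
  by rewrite ltr_pdivrMr ?exprn_gt0 ?ltr0n // mul1r -natrX ltr_nat.
pose b m := rate_bound (m%:R / (n m)%:R ^+ 2)
                       (m%:R * ln ((n m)%:R : R) ^+ 2 / (n m)%:R ^+ 2).
have u_bounds : \forall m \near \oo, u m \is a fin_num /\ - b m <= fine (u m) <= 0.
  near=> m; have [m_ge72 m_lt] : (72 <= m)%N /\ (m < n m ^ 2)%N by near: m.
  exact: log_err_rate_phiF_bounds m_ge72 m_lt (ltW eps_lt2) cbar_ge3.
apply: cvg_EFin; first by apply: filterS u_bounds => m [].
apply: (@squeeze_cvgr _ _ _ _ (fun m => - b m) (fun=> 0)); last exact: cvg_cst.
  by apply: filterS u_bounds => m [].
by rewrite -oppr0; apply: cvgN; exact: rate_bound_cvg0.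
Unshelve. all: by end_near.
Qed.
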